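(* Let $H$ be a graph and $G=L(H)$. Then $G$ is localizable if and only if $H$ contains an independent set $S$ of strong vertices and a set $\mathcal{T}$ of strong triangles of $H$ that decomposes the graph $H-S$ (i.e., each triangle in $\mathcal{T}$ is a subgraph of $H-S$ and each edge of $H-S$ lies in exactly one triangle of $\mathcal{T}$).
   Context: $L(H)$ is the line graph of $H$. A clique is strong if it intersects every maximal independent set; a graph is localizable if its vertex set admits a partition into strong cliques. A vertex $v$ of $H$ is strong if every maximal matching of $H$ covers $v$. A triangle $T$ of $H$ is strong if every maximal matching of $H$ contains an edge of $T$. *)

(* Finite simple graphs as symmetric irreflexive relations. *)
From mathcomp Require Import all_boot.
Set Implicit Arguments. Unset Strict Implicit. Unset Printing Implicit Defensive.

Section Graphs.
Variable T : finType.
Variable e : rel T.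

Definition independent (S : {set T}) : bool :=
  [forall x in S, forall y in S, ~~ e x y].

Definition maximal_independent (S : {set T}) : bool :=
  maxset independent S.

Definition clique (C : {set T}) : bool :=
  [forall x in C, forall y in C, (x != y) ==> e x y].

Definition strong_clique (C : {set T}) : Prop :=
  clique C /\ forall S, maximal_independent S -> exists2 x, x \in C & x \in S.

Definition localizable : Prop :=
  exists P : {set {set T}}, partition P [set: T] /\
    forall C, C \in P -> strong_clique C.
End Graphs.

Section LineGraph.
Variable V : finType.
Variable adj : rel V.

Definition is_edge (E : {set V}) : bool :=
  [exists x, exists y, adj x y && (E == [set x; y])].

End LineGraph.

(* vertex type of the line graph L(H): the edges of H *)
Notation edge_of adj := {E : {set _} | is_edge adj E}.

Definition line_rel (V : finType) (adj : rel V) : rel (edge_of adj) :=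
  fun E F => (E != F) && (val E :&: val F != set0).

Section Matchings.
Variable V : finType.
Variable adj : rel V.

Definition matching (M : {set edge_of adj}) : bool :=
  [forall E in M, forall F in M, (E != F) ==> (val E :&: val F == set0)].

Definition maximal_matching (M : {set edge_of adj}) : bool :=
  maxset matching M.

Definition strong_vertex (v : V) : Prop :=
  forall M, maximal_matching M -> exists2 E, E \in M & v \in val E.

Definition triangle (Tr : {set V}) : bool :=
  (#|Tr| == 3) && clique adj Tr.

Definition strong_triangle (Tr : {set V}) : Prop :=
  forall M, maximal_matching M -> exists2 E, E \in M & val E \subset Tr.
End Matchings.

Arguments line_rel {V} adj.
Arguments matching {V} adj M.
Arguments maximal_matching {V} adj M.
Arguments strong_vertex {V} adj v.
Arguments triangle {V} adj Tr.
Arguments strong_triangle {V} adj Tr.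
Arguments independent {T} e S.
Arguments clique {T} e C.
Arguments is_edge {V} adj E.
Arguments localizable {T} e.

From mathcomp Require Import all_boot.
Set Implicit Arguments. Unset Strict Implicit. Unset Printing Implicit Defensive.

(* Matchings of H are the independent sets of L(H), and a nonempty clique of
   L(H) is either a set of edges through one vertex or a set of edges of one
   triangle. A strong clique is inclusion-maximal among cliques, so the blocks
   of a partition of L(H) into strong cliques are full stars at strong
   vertices and full edge sets of strong triangles. Since an edge lies in a
   single block, the star centres are pairwise nonadjacent and avoid the
   triangles, and the triangles cover every edge off the centres exactly once;
   conversely such stars and triangles partition E(H) into strong cliques. *)

Section StrongCliques.
Variables (T : finType) (e : rel T).
Hypothesis e_irr : irreflexive e.

Lemma independent_set1 x : independent e [set x].
Proof.
by apply/forallP => y; apply/implyP; rewrite inE => /eqP ->;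
   apply/forallP => z; apply/implyP; rewrite inE => /eqP ->; rewrite e_irr.
Qed.

Lemma strong_clique_neq0 C : strong_clique e C -> C != set0.
Proof.
move=> [_ meetC].
have indep0 : independent e set0 by apply/forallP => x; rewrite inE.
have [M maxM _] := maxset_exists indep0.
by have [x xC _] := meetC M maxM; apply/set0Pn; exists x.
Qed.

(* Any vertex outside C is adjacent to all of C, yet some maximal independent
   set through it must meet C. *)
Lemma strong_clique_sub_clique (C X : {set T}) :
  strong_clique e C -> C \subset X -> clique e X -> C = X.
Proof.
move=> [_ meetC] CX cliqueX; apply/eqP; rewrite eqEsubset CX /=.
apply/subsetP => f fX; apply/negPn/negP => fC.
have [M maxM fM] := maxset_exists (independent_set1 f).
have [g gC gM] := meetC M maxM.
have gf : g != f by apply: contraNneq fC => <-.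
have egf : e g f.
  by move: cliqueX => /forallP/(_ g)/implyP/(_ (subsetP CX g gC))
    /forallP/(_ f)/implyP/(_ fX)/implyP/(_ gf).
move: (maxsetp maxM) => /forallP/(_ g)/implyP/(_ gM)/forallP/(_ f)/implyP.
by rewrite (subsetP fM) ?set11 // egf => /(_ isT).
Qed.

End StrongCliques.

Section LineGraph.
Variables (V : finType) (adj : rel V).
Hypotheses (adj_sym : symmetric adj) (adj_irr : irreflexive adj).

Local Notation edge := (edge_of adj).

Lemma adj_neq x y : adj x y -> x != y.
Proof. by apply: contraTneq => ->; rewrite adj_irr. Qed.

Lemma edgeP (g : edge) : exists x y, adj x y /\ val g = [set x; y].
Proof. by case: g => A /= /existsP [x /existsP [y /andP [xy /eqP ->]]]; exists x, y. Qed.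

Lemma edge_from (g : edge) x : x \in val g -> exists y, adj x y /\ val g = [set x; y].
Proof.
have [a [b [ab ->]]] := edgeP g.
by rewrite !inE => /orP [] /eqP ->; [exists b | exists a; rewrite adj_sym setUC].
Qed.

Lemma card_edge (g : edge) : #|val g| = 2.
Proof. by have [x [y [xy ->]]] := edgeP g; rewrite cards2 (adj_neq xy). Qed.

Lemma edge_adj (g : edge) x y : x != y -> x \in val g -> y \in val g -> adj x y.
Proof.
move=> xy xg; have [z [xz ->]] := edge_from xg.
by rewrite !inE eq_sym (negbTE xy) => /eqP ->.
Qed.

Lemma is_edge2 x y : adj x y -> is_edge adj [set x; y].
Proof. by move=> xy; apply/existsP; exists x; apply/existsP; exists y; rewrite xy eqxx. Qed.

Definition edge2 x y (xy : adj x y) : edge := exist _ [set x; y] (is_edge2 xy).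

Definition edges_at (v : V) : {set edge} := [set g : edge | v \in val g].
Definition edges_in (X : {set V}) : {set edge} := [set g : edge | val g \subset X].

Lemma line_rel_irr : irreflexive (line_rel adj).
Proof. by move=> g; rewrite /line_rel eqxx. Qed.

Lemma independent_line_matching : independent (line_rel adj) =1 matching adj.
Proof.
move=> M; rewrite /independent /matching.
apply: eq_forallb => g /=; case: (g \in M) => //=.
apply: eq_forallb => h /=; case: (h \in M) => //=.
by rewrite /line_rel; case: (g != h); case: (_ == set0).
Qed.

Lemma maximal_independent_line M :
  maximal_independent (line_rel adj) M = maximal_matching adj M.
Proof. exact: maxset_eq independent_line_matching. Qed.

Lemma clique_lineP (C : {set edge}) :
  reflect {in C &, forall g h, val g :&: val h != set0} (clique (line_rel adj) C).
Proof.
apply: (iffP forallP) => [cliqueC g h gC hC | meetC g].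
  case: (eqVneq g h) => [<-|gh]; first by rewrite setIid -card_gt0 card_edge.
  by move: (cliqueC g); rewrite gC => /forallP/(_ h); rewrite hC gh => /andP [].
apply/implyP => gC; apply/forallP => h; apply/implyP => hC; apply/implyP => gh.
by rewrite /line_rel gh meetC.
Qed.

Lemma clique_edges_at v : clique (line_rel adj) (edges_at v).
Proof.
by apply/clique_lineP => g h; rewrite !inE => gv hv; apply/set0Pn; exists v; rewrite inE gv.
Qed.

Lemma strong_vertexE v :
  strong_vertex adj v <-> strong_clique (line_rel adj) (edges_at v).
Proof.
split=> [strong_v | [_ meet_v] M maxM].
  split=> [|M]; first exact: clique_edges_at.
  by rewrite maximal_independent_line => /strong_v [g gM vg]; exists g; rewrite ?inE.
have [g] := meet_v M (etrans (maximal_independent_line M) maxM).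
by rewrite inE; exists g.
Qed.

Lemma triangle_adj Tr x y : triangle adj Tr -> x \in Tr -> y \in Tr -> x != y -> adj x y.
Proof.
by case/andP=> _ /forallP/(_ x)/implyP cliqueTr xTr yTr;
   move: (cliqueTr xTr) => /forallP/(_ y)/implyP/(_ yTr)/implyP.
Qed.

Lemma triangle_others Tr x : triangle adj Tr -> x \in Tr ->
  exists y z, [/\ y \in Tr, z \in Tr, y != z, y != x & z != x].
Proof.
move=> /andP [/eqP card3 _] xTr.
have : 1 < #|Tr :\ x| by move: card3; rewrite (cardsD1 x Tr) xTr add1n => -[->].
by move=> /card_gt1P [y [z]]; rewrite !in_setD1 => -[/andP [? ?] /andP [? ?] ?]; exists y, z.
Qed.

Lemma triangle3 a b c : adj a b -> adj b c -> adj a c -> triangle adj [set a; b; c].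
Proof.
move=> ab bc ac; apply/andP; split.
  by rewrite -setUA !cardsU1 cards1 !inE negb_or !adj_neq.
apply/forallP => x; apply/implyP => xT; apply/forallP => y; apply/implyP => yT.
apply/implyP; move: xT yT; rewrite !inE.
by move=> /orP [/orP [] | ] /eqP -> /orP [/orP [] | ] /eqP ->;
   rewrite ?eqxx // => _; rewrite 1?adj_sym.
Qed.

Lemma clique_edges_in Tr : triangle adj Tr -> clique (line_rel adj) (edges_in Tr).
Proof.
case/andP=> /eqP card3 _; apply/clique_lineP => g h; rewrite !inE => gTr hTr.
have gh3 : #|val g :|: val h| <= 3 by rewrite -card3 subset_leq_card // subUset gTr.
rewrite -card_gt0 -(ltn_add2l #|val g :|: val h|) cardsUI !card_edge addn0.
exact: leq_ltn_trans gh3 _.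
Qed.

Lemma strong_triangleE Tr : triangle adj Tr ->
  strong_triangle adj Tr <-> strong_clique (line_rel adj) (edges_in Tr).
Proof.
move=> triTr; split=> [strongTr | [_ meetTr] M maxM].
  split=> [|M]; first exact: clique_edges_in.
  by rewrite maximal_independent_line => /strongTr [g gM gTr]; exists g; rewrite ?inE.
have [g] := meetTr M (etrans (maximal_independent_line M) maxM).
by rewrite inE; exists g.
Qed.

Lemma triangle_edge_at Tr x : triangle adj Tr -> x \in Tr ->
  exists2 g : edge, x \in val g & g \in edges_in Tr.
Proof.
move=> triTr xTr; have [y [_ [yTr _ _ yx _]]] := triangle_others triTr xTr.
have xy : adj x y by rewrite (triangle_adj triTr) // eq_sym.
exists (edge2 xy); rewrite /= ?inE ?eqxx //.
by apply/subsetP => u; rewrite !inE => /orP [] /eqP ->.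
Qed.

Lemma edges_in_inj T1 T2 : triangle adj T1 -> triangle adj T2 ->
  edges_in T1 = edges_in T2 -> T1 = T2.
Proof.
suff sub12 X Y : triangle adj X -> edges_in X = edges_in Y -> X \subset Y.
  by move=> tri1 tri2 e12; apply/eqP; rewrite eqEsubset !sub12.
move=> triX eXY; apply/subsetP => x xX; have [g xg] := triangle_edge_at triX xX.
by rewrite eXY inE => /subsetP; apply.
Qed.

(* With g0 = {a, b}, some edge g1 misses a and some g2 misses b; meeting
   pairwise forces g1 = {b, c} and g2 = {a, c}, and an edge leaving
   {a, b, c} would need its other end in g0, g1 and g2 at once. *)
Lemma clique_sub_triangle C : clique (line_rel adj) C -> C != set0 ->
  (forall v, ~~ (C \subset edges_at v)) ->
  exists2 Tr, triangle adj Tr & C \subset edges_in Tr.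
Proof.
move=> /clique_lineP meetC /set0Pn [g0 g0C] not_star.
have meet : {in C &, forall g h : edge, exists2 z, z \in val g & z \in val h}.
  move=> g h gC hC; have /set0Pn [z] := meetC g h gC hC.
  by rewrite inE => /andP [] zg zh; exists z.
have [a [b [ab e0]]] := edgeP g0.
have [g1 g1C ag1] : exists2 g1, g1 \in C & a \notin val g1.
  by have /subsetPn [g1 g1C] := not_star a; rewrite inE; exists g1.
have [g2 g2C bg2] : exists2 g2, g2 \in C & b \notin val g2.
  by have /subsetPn [g2 g2C] := not_star b; rewrite inE; exists g2.
have bg1 : b \in val g1.
  have [z zg0 zg1] := meet g0 g1 g0C g1C; move: zg0; rewrite e0 !inE.
  by case/orP=> /eqP ez; [rewrite -ez zg1 in ag1 | rewrite -ez].
have ag2 : a \in val g2.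
  have [z zg0 zg2] := meet g0 g2 g0C g2C; move: zg0; rewrite e0 !inE.
  by case/orP=> /eqP ez; [rewrite -ez | rewrite -ez zg2 in bg2].
have [c [bc e1]] := edge_from bg1; have [d [ad e2]] := edge_from ag2.
have cd : c = d.
  have [w wg1 wg2] := meet g1 g2 g1C g2C.
  have wa : w != a by apply: contraNneq ag1 => <-.
  have wb : w != b by apply: contraNneq bg2 => <-.
  by move: wg1 wg2; rewrite e1 e2 !inE (negbTE wa) (negbTE wb) => /eqP <- /eqP <-.
subst d; exists [set a; b; c]; first exact: triangle3.
have g0T : val g0 \subset [set a; b; c] by rewrite e0 subUset !sub1set !inE !eqxx ?orbT.
have g1T : val g1 \subset [set a; b; c] by rewrite e1 subUset !sub1set !inE !eqxx ?orbT.
have g2T : val g2 \subset [set a; b; c] by rewrite e2 subUset !sub1set !inE !eqxx ?orbT.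
apply/subsetP => g gC; rewrite inE; apply/subsetP => x xg; apply/negPn/negP => xT.
have [y [_ eg]] := edge_from xg.
have y_on h : h \in C -> val h \subset [set a; b; c] -> y \in val h.
  move=> hC hT; have [z zg zh] := meet g h gC hC; move: zg; rewrite eg !inE.
  by case/orP=> /eqP ez; [rewrite -ez (subsetP hT) in xT | rewrite -ez].
move: (y_on g0 g0C g0T); rewrite e0 !inE => /orP [] /eqP ey.
  by move: ag1; rewrite -ey y_on.
by move: bg2; rewrite -ey y_on.
Qed.

Section FromPartition.
Variable P : {set {set edge}}.
Hypothesis P_partition : partition P [set: edge].
Hypothesis P_strong : forall C, C \in P -> strong_clique (line_rel adj) C.

Lemma block_exists (g : edge) : exists2 B, B \in P & g \in B.
Proof.
have : g \in cover P by rewrite (cover_partition P_partition) inE.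
by case/bigcupP=> B BP gB; exists B.
Qed.

Lemma block_eq B1 B2 (g : edge) : B1 \in P -> B2 \in P -> g \in B1 -> g \in B2 -> B1 = B2.
Proof.
case/and3P: P_partition => _ trivP _ B1P B2P gB1 gB2.
by rewrite -(def_pblock trivP B1P gB1) (def_pblock trivP B2P gB2).
Qed.

(* A single-edge block {xy} is a star at both x and y: [pick] chooses one
   centre, which keeps the set of centres independent. *)
Definition center (B : {set edge}) : option V := [pick v | B \subset edges_at v].

Definition centers : {set V} := [set v | [exists B in P, center B == Some v]].

Definition block_triangles : {set {set V}} :=
  [set Tr | triangle adj Tr && (edges_in Tr \in P)].

Lemma center_block B v : B \in P -> center B = Some v -> B = edges_at v.
Proof.
rewrite /center => BP; case: pickP => // w Bw [<-].
exact: (strong_clique_sub_clique line_rel_irr (P_strong BP) Bw (clique_edges_at w)).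
Qed.

Lemma centerless_block B : B \in P -> center B = None ->
  exists2 Tr, triangle adj Tr & B = edges_in Tr.
Proof.
rewrite /center => BP; case: pickP => // not_star _.
have [cliqueB _] := P_strong BP.
have B0 := strong_clique_neq0 (P_strong BP).
have [Tr triTr BTr] := clique_sub_triangle cliqueB B0 (fun v => negbT (not_star v)).
exists Tr => //.
exact: (strong_clique_sub_clique line_rel_irr (P_strong BP) BTr (clique_edges_in triTr)).
Qed.

Lemma centersP v : reflect (exists2 B, B \in P & center B = Some v) (v \in centers).
Proof. by rewrite inE; apply: (iffP exists_inP) => -[B BP /eqP]; exists B. Qed.

Lemma centers_independent : independent adj centers.
Proof.
apply/forallP => u; apply/implyP => /centersP [B1 B1P c1].
apply/forallP => w; apply/implyP => /centersP [B2 B2P c2]; apply/negP => uw.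
have uw_B1 : edge2 uw \in B1 by rewrite (center_block B1P c1) !inE eqxx.
have uw_B2 : edge2 uw \in B2 by rewrite (center_block B2P c2) !inE eqxx orbT.
move: c1; rewrite (block_eq B1P B2P uw_B1 uw_B2) c2 => -[wu].
by move: (adj_neq uw); rewrite wu eqxx.
Qed.

Lemma centers_strong v : v \in centers -> strong_vertex adj v.
Proof.
case/centersP=> B BP cB.
by apply/strong_vertexE; rewrite -(center_block BP cB); apply: P_strong.
Qed.

Lemma block_triangle_spec Tr : Tr \in block_triangles ->
  [/\ triangle adj Tr, strong_triangle adj Tr & Tr :&: centers = set0].
Proof.
rewrite inE => /andP [triTr TrP]; split => //; first exact/(strong_triangleE triTr)/P_strong.
apply/setP => v; rewrite in_setI in_set0; apply/negP => /andP [vTr /centersP [B BP cB]].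
have [y [z [yTr zTr y_z y_v z_v]]] := triangle_others triTr vTr.
have vy : adj v y by rewrite (triangle_adj triTr) // eq_sym.
have yz : adj y z by rewrite (triangle_adj triTr).
have vy_in : edge2 vy \in edges_in Tr by rewrite inE subUset !sub1set vTr yTr.
have vy_at : edge2 vy \in B by rewrite (center_block BP cB) !inE eqxx.
have yz_in : edge2 yz \in edges_in Tr by rewrite inE subUset !sub1set yTr zTr.
move: yz_in; rewrite (block_eq TrP BP vy_in vy_at) (center_block BP cB) !inE.
by rewrite !(eq_sym v) (negbTE y_v) (negbTE z_v).
Qed.

Lemma block_triangles_decompose (E : edge) : val E :&: centers = set0 ->
  #|[set Tr in block_triangles | val E \subset Tr]| = 1.
Proof.
move=> E_off; have [B BP EB] := block_exists E.
case cB: (center B) => [v|].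
  have vE : v \in val E by move: EB; rewrite (center_block BP cB) inE.
  have vc : v \in centers by apply/centersP; exists B.
  by have := in_set0 v; rewrite -E_off inE vE vc.
have [Tr triTr eB] := centerless_block BP cB.
have ETr : val E \subset Tr by move: EB; rewrite eB inE.
apply/eqP/cards1P; exists Tr; apply/setP => Tr0; rewrite !inE.
apply/andP/eqP => [[/andP [triTr0 Tr0P] ETr0] | ->]; last by rewrite triTr -eB BP ETr.
have E_Tr0 : E \in edges_in Tr0 by rewrite inE.
by apply: edges_in_inj => //; rewrite -eB (block_eq Tr0P BP E_Tr0 EB).
Qed.

End FromPartition.

Section FromDecomposition.
Variables (S : {set V}) (TT : {set {set V}}).
Hypothesis S_independent : independent adj S.
Hypothesis S_strong : forall v, v \in S -> strong_vertex adj v.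
Hypothesis TT_spec : forall Tr, Tr \in TT ->
  [/\ triangle adj Tr, strong_triangle adj Tr & Tr :&: S = set0].
Hypothesis TT_decompose : forall E : edge, val E :&: S = set0 ->
  #|[set Tr in TT | val E \subset Tr]| = 1.

Definition blocks : {set {set edge}} := (edges_at @: S) :|: (edges_in @: TT).

Lemma TT_notin_S Tr v : Tr \in TT -> v \in Tr -> v \notin S.
Proof.
move=> TrT vTr; have [_ _ TrS] := TT_spec TrT; apply/negP => vS.
by have := in_set0 v; rewrite -TrS inE vTr vS.
Qed.

Lemma TT_unique T1 T2 (g : edge) : T1 \in TT -> T2 \in TT ->
  val g \subset T1 -> val g \subset T2 -> T1 = T2.
Proof.
move=> T1T T2T gT1 gT2.
have g_off : val g :&: S = set0.
  apply/setP => v; rewrite !inE; apply/negbTE/negP => /andP [vg].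
  exact/negP/(TT_notin_S T1T (subsetP gT1 v vg)).
have /eqP/cards1P [Tr0 eTr0] := TT_decompose g_off.
have : T1 \in [set Tr in TT | val g \subset Tr] by rewrite inE T1T.
have : T2 \in [set Tr in TT | val g \subset Tr] by rewrite inE T2T.
by rewrite eTr0 !inE => /eqP -> /eqP ->.
Qed.

Lemma blocks_cover : cover blocks = [set: edge].
Proof.
apply/setP => g; rewrite inE; apply/bigcupP.
case: (boolP (val g :&: S == set0)) => [/eqP g_off | /set0Pn [v]].
  have /eqP/cards1P [Tr eTr] := TT_decompose g_off.
  have : Tr \in [set Tr in TT | val g \subset Tr] by rewrite eTr set11.
  rewrite inE => /andP [TrT gTr]; exists (edges_in Tr); last by rewrite inE.
  by rewrite inE; apply/orP; right; apply/imsetP; exists Tr.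
rewrite inE => /andP [vg vS]; exists (edges_at v); last by rewrite inE.
by rewrite inE; apply/orP; left; apply/imsetP; exists v.
Qed.

Lemma blocks_trivI : trivIset blocks.
Proof.
apply/trivIsetP => A B; rewrite !inE.
move=> /orP [] /imsetP [u uS ->] /orP [] /imsetP [w wS ->] AB;
  rewrite -setI_eq0; apply/eqP/setP => g; rewrite !inE; apply/negbTE/negP => /andP [gA gB].
- have uw : u != w by apply: contraNneq AB => ->.
  move: S_independent => /forallP/(_ u)/implyP/(_ uS)/forallP/(_ w)/implyP/(_ wS).
  by rewrite (edge_adj uw gA gB).
- exact: negP (TT_notin_S wS (subsetP gB u gA)) uS.
- exact: negP (TT_notin_S uS (subsetP gA w gB)) wS.
- by move: AB; rewrite (TT_unique uS wS gA gB) eqxx.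
Qed.

Lemma blocks_strong C : C \in blocks -> strong_clique (line_rel adj) C.
Proof.
rewrite inE => /orP [] /imsetP [u uS ->]; first exact/strong_vertexE/S_strong.
by have [triTr strongTr _] := TT_spec uS; apply/(strong_triangleE triTr).
Qed.

Lemma localizable_of_decomposition : localizable (line_rel adj).
Proof.
exists blocks; split; last exact: blocks_strong.
apply/and3P; split; [by rewrite blocks_cover | exact: blocks_trivI |].
by apply/negP => /blocks_strong/strong_clique_neq0; rewrite eqxx.
Qed.

End FromDecomposition.

End LineGraph.

Theorem mainTheorem14 (V : finType) (adj : rel V)
  (adj_sym : symmetric adj) (adj_irr : irreflexive adj) :
  localizable (line_rel adj) <->
  exists (S : {set V}) (TT : {set {set V}}),
    [/\ independent adj S,
        (forall v, v \in S -> strong_vertex adj v),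
        (forall Tr, Tr \in TT ->
            [/\ triangle adj Tr, strong_triangle adj Tr & Tr :&: S = set0]) &
        (forall E : edge_of adj, val E :&: S = set0 ->
            #|[set Tr in TT | val E \subset Tr]| = 1)].
Proof.
split=> [[P [P_partition P_strong]] | [S [TT [S_indep S_strong TT_spec TT_dec]]]].
  exists (centers P), (block_triangles P); split.
  - exact: centers_independent.
  - exact: centers_strong.
  - exact: block_triangle_spec.
  - exact: block_triangles_decompose.
exact: localizable_of_decomposition S_indep S_strong TT_spec TT_dec.
Qed.
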